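(* Let $A\in\mathcal{V}$ and $U\subseteq Max(A)$. Then $U$ is a clopen subset of $Max(A)$ if and only if there exist $\alpha,\beta\in K(A)$ such that $\alpha\vee\beta=\nabla_A$, $[\alpha,\beta]\subseteq Rad(A)$ and $U=Max(A)\cap D_A(\alpha)$.
   Context: $\mathcal{V}$ is a congruence modular, semidegenerate variety (no nontrivial algebra has a one-element subalgebra) of finite signature. For $B\in\mathcal{V}$: $Con(B)$ is its congruence lattice with bounds $\Delta_B,\nabla_B$, $[\cdot,\cdot]$ the Freese–McKenzie commutator, $K(B)$ the compact congruences. A congruence $\phi\neq\nabla_B$ is prime if $[\alpha,\beta]\subseteq\phi$ implies $\alpha\subseteq\phi$ or $\beta\subseteq\phi$; $Spec(B)$ is the set of primes, $Max(B)\subseteq Spec(B)$ the set of maximal congruences, $Rad(B)=\bigcap Max(B)$; $\rho(\theta)$ is the intersection of primes containing $\theta$. $D_B(\theta)=\{\phi\in Spec(B):\theta\not\subseteq\phi\}$; these sets are the open sets of a topology on $Spec(B)$, and $Max(B)$ has the subspace topology. $B(Con(B))$ is the Boolean algebra of complemented elements of $Con(B)$. When $K(B)$ is closed under the commutator, the reticulation $L(B)=K(B)/{\equiv}$ ($\alpha\equiv\beta$ iff $\rho(\alpha)=\rho(\beta)$) is a bounded distributive lattice with canonical map $\lambda_B$, mapping $B(Con(B))$ injectively into $B(L(B))$; the reticulation preserves the Boolean center if this map is onto $B(L(B))$. Standing assumption: for every $B\in\mathcal{V}$, $K(B)$ is closed under the commutator and the reticulation of $B$ preserves the Boolean center. 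*)

From mathcomp Require Import all_boot.
From Stdlib Require List. Import List.ListNotations.
Notation In := List.In.
Set Implicit Arguments. Unset Strict Implicit. Unset Printing Implicit Defensive.

Record signature := Signature { sym : finType; arity : sym -> nat }.

Record algebra (S : signature) := Algebra {
  carrier :> Type;
  op : forall f : sym S, ('I_(arity f) -> carrier) -> carrier }.

Inductive term (S : signature) (V : Type) : Type :=
| Var : V -> term S V
| App : forall f : sym S, ('I_(arity f) -> term S V) -> term S V.

Fixpoint eval (S : signature) (A : algebra S) (V : Type) (v : V -> A)
  (t : term S V) : A :=
  match t with
  | Var x => v x
  | App f ts => @op S A f (fun i => eval v (ts i))
  end.

(* A satisfies every identity t = u of Sigma.  The variety V is the class
   Mod(Sigma) of all algebras satisfying Sigma (Birkhoff). *)
Definition satisfies (S : signature) (A : algebra S)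
  (Sigma : term S nat -> term S nat -> Prop) : Prop :=
  forall t u, Sigma t u -> forall v : nat -> A, eval v t = eval v u.

Definition relA (T : Type) := T -> T -> Prop.
Definition rsub (T : Type) (r s : relA T) := forall x y, r x y -> s x y.
Definition reqv (T : Type) (r s : relA T) := forall x y, r x y <-> s x y.

Section Cong.
Variables (S : signature) (A : algebra S).

Definition is_congruence (th : relA A) : Prop :=
  (forall x, th x x) /\ (forall x y, th x y -> th y x) /\
  (forall x y z, th x y -> th y z -> th x z) /\
  (forall (f : sym S) (a b : 'I_(arity f) -> A),
      (forall i, th (a i) (b i)) -> th (@op S A f a) (@op S A f b)).

Definition cDelta : relA A := fun x y => x = y.
Definition cNabla : relA A := fun _ _ => True.

Definition cg (R : relA A) : relA A :=
  fun x y => forall th, is_congruence th -> rsub R th -> th x y.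

Definition cjoin (al be : relA A) : relA A := cg (fun x y => al x y \/ be x y).
Definition cmeet (al be : relA A) : relA A := fun x y => al x y /\ be x y.
Definition cjoin_fam (P : relA A -> Prop) : relA A :=
  cg (fun x y => exists th, P th /\ th x y).

Definition compact (th : relA A) : Prop :=
  is_congruence th /\
  forall P : relA A -> Prop, (forall ps, P ps -> is_congruence ps) ->
    rsub th (cjoin_fam P) ->
    exists l : list (relA A), (forall ps, In ps l -> P ps) /\
      rsub th (cjoin_fam (fun ps => In ps l)).

Definition complemented (th : relA A) : Prop :=
  is_congruence th /\ exists ps, is_congruence ps /\
    reqv (cjoin th ps) cNabla /\ reqv (cmeet th ps) cDelta.

(** Commutator, via the term condition C(al, be; de). *)
Definition sumv (a c : nat -> A) : nat + nat -> A :=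
  fun z => match z with inl i => a i | inr j => c j end.

Definition centralizes (al be de : relA A) : Prop :=
  forall (t : term S (nat + nat)) (a b c d : nat -> A),
    (forall i, al (a i) (b i)) -> (forall j, be (c j) (d j)) ->
    de (eval (sumv a c) t) (eval (sumv a d) t) ->
    de (eval (sumv b c) t) (eval (sumv b d) t).

Definition comm (al be : relA A) : relA A :=
  fun x y => forall de, is_congruence de -> centralizes al be de -> de x y.

Definition prime_cong (ph : relA A) : Prop :=
  is_congruence ph /\ ~ reqv ph cNabla /\
  forall al be, is_congruence al -> is_congruence be ->
    rsub (comm al be) ph -> rsub al ph \/ rsub be ph.

Definition max_cong (ph : relA A) : Prop :=
  is_congruence ph /\ ~ reqv ph cNabla /\
  forall ps, is_congruence ps -> rsub ph ps -> reqv ps ph \/ reqv ps cNabla.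

Definition Rad : relA A := fun x y => forall ph, max_cong ph -> ph x y.

Definition rho (th : relA A) : relA A :=
  fun x y => forall ph, prime_cong ph -> rsub th ph -> ph x y.

Definition Dset (th : relA A) (ph : relA A) : Prop :=
  prime_cong ph /\ ~ rsub th ph.

(* open subsets of Max(A) in the subspace topology: Max(A) ∩ D_A(th) *)
Definition open_in_Max (W : relA A -> Prop) : Prop :=
  exists th, is_congruence th /\ forall ph, W ph <-> max_cong ph /\ Dset th ph.

Definition clopen_in_Max (W : relA A -> Prop) : Prop :=
  open_in_Max W /\ open_in_Max (fun ph => max_cong ph /\ ~ W ph).

End Cong.

Definition cong_modular_var (S : signature) (Sigma : term S nat -> term S nat -> Prop) :=
  forall B : algebra S, satisfies B Sigma ->
  forall al be ga : relA B, is_congruence al -> is_congruence be -> is_congruence ga ->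
    rsub al ga -> reqv (cmeet (cjoin al be) ga) (cjoin al (cmeet be ga)).

Definition semidegenerate_var (S : signature) (Sigma : term S nat -> term S nat -> Prop) :=
  forall B : algebra S, satisfies B Sigma ->
  forall x : B, (forall f : sym S, @op S B f (fun _ => x) = x) -> forall y z : B, y = z.

Definition compact_comm_closed_var (S : signature) (Sigma : term S nat -> term S nat -> Prop) :=
  forall B : algebra S, satisfies B Sigma ->
  forall al be : relA B, compact al -> compact be -> compact (comm al be).

(* lambda_B : B(Con B) -> B(L B) is onto.  In L(B) = K(B)/≡ one has
   [a] ∨ [b] = [a ∨ b], [a] ∧ [b] = [[a,b]], 0 = [Δ], 1 = [∇], and
   [a] = [b] iff rho a = rho b. *)
Definition preserves_boolean_center_var (S : signature)
  (Sigma : term S nat -> term S nat -> Prop) :=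
  forall B : algebra S, satisfies B Sigma ->
  forall al : relA B, compact al ->
    (exists be : relA B, compact be /\
       reqv (rho (cjoin al be)) (rho (@cNabla S B)) /\
       reqv (rho (comm al be)) (rho (@cDelta S B))) ->
    exists ga : relA B, compact ga /\ complemented ga /\ reqv (rho ga) (rho al).

From mathcomp Require Import all_boot boolp classical_sets.
From Stdlib Require List.
Set Implicit Arguments. Unset Strict Implicit. Unset Printing Implicit Defensive.

(* If U = Max(A) ∩ D(th1) and Max(A) \ U = Max(A) ∩ D(th2), no maximal congruence contains
   both th1 and th2.  As ∇ is compact, every proper congruence lies below a maximal one (Zorn),
   so th1 ∨ th2 = ∇, and compactness again shrinks th1, th2 to finitely generated al ⊆ th1,
   be ⊆ th2 with al ∨ be = ∇; then [al, be] ⊆ al ∧ be lies in every maximal congruence.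
   Conversely, for such al and be, Max(A) \ U = Max(A) ∩ D(be) because maximal congruences
   are prime.
   Compactness of ∇ and primeness of maximal congruences both come from semidegeneracy: a
   failure of either produces a one-element subalgebra in a quotient, of the reduced power of
   A over the finite subfamilies of a cover of ∇, resp. of A(be) modulo a congruence built from
   the matrices M(al, be) (this is where modularity enters). *)

Section Congruences.
Variables (S : signature) (A : algebra S).
Implicit Types (th al be : relA A) (P : relA A -> Prop).

Lemma cong_refl th : is_congruence th -> forall x, th x x.
Proof. by case. Qed.

Lemma cong_sym th : is_congruence th -> forall x y, th x y -> th y x.
Proof. by case=> _ []. Qed.

Lemma cong_trans th : is_congruence th -> forall x y z, th x y -> th y z -> th x z.
Proof. by case=> _ [] _ []. Qed.

Lemma cong_op th : is_congruence th -> forall (f : sym S) (a b : 'I_(arity f) -> A),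
  (forall i, th (a i) (b i)) -> th (@op S A f a) (@op S A f b).
Proof. by case=> _ [] _ []. Qed.

Lemma cong_eval th (V : Type) (v w : V -> A) (t : term S V) :
  is_congruence th -> (forall n, th (v n) (w n)) -> th (eval v t) (eval w t).
Proof. by move=> Hth Hvw; elim: t => [x|f ts IH] //=; apply: cong_op. Qed.

Lemma delta_cong : is_congruence (@cDelta S A).
Proof.
split; [done|split; [by move=> x y ->|split; [by move=> x y z -> ->|]]].
by move=> f a b Hab; congr (@op S A f _); apply: funext.
Qed.

Lemma nabla_cong : is_congruence (@cNabla S A).
Proof. by []. Qed.

Lemma cmeet_cong al be :
  is_congruence al -> is_congruence be -> is_congruence (cmeet al be).
Proof.
move=> Hal Hbe; split; [|split; [|split]].
- by move=> x; split; apply: cong_refl.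
- by move=> x y [] ? ?; split; apply: cong_sym.
- move=> x y z [Hal_xy Hbe_xy] [Hal_yz Hbe_yz].
  by split; [apply: (cong_trans Hal) Hal_yz|apply: (cong_trans Hbe) Hbe_yz].
- by move=> f a b Hab; split; apply: cong_op => // i; case: (Hab i).
Qed.

Lemma cg_cong (R : relA A) : is_congruence (cg R).
Proof.
split; [|split; [|split]].
- by move=> x th Hth _; apply: cong_refl.
- by move=> x y Hxy th Hth HR; apply: cong_sym => //; apply: Hxy.
- by move=> x y z Hxy Hyz th Hth HR; apply: (cong_trans Hth); [apply: Hxy|apply: Hyz].
- by move=> f a b Hab th Hth HR; apply: cong_op => // i; apply: Hab.
Qed.

Lemma cg_trans (R : relA A) x y z : cg R x y -> cg R y z -> cg R x z.
Proof. exact: (cong_trans (cg_cong R)). Qed.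

Lemma cg_incl (R : relA A) : rsub R (cg R).
Proof. by move=> x y Hxy th _; apply. Qed.

Lemma cg_min (R : relA A) th : is_congruence th -> rsub R th -> rsub (cg R) th.
Proof. by move=> Hth HR x y; apply. Qed.

Lemma cg_mono (R R' : relA A) : rsub R R' -> rsub (cg R) (cg R').
Proof. by move=> HR; apply: cg_min (cg_cong _) _ => x y /HR; apply: cg_incl. Qed.

Lemma cjoin_l al be : rsub al (cjoin al be).
Proof. by move=> x y H; apply: cg_incl; left. Qed.

Lemma cjoin_r al be : rsub be (cjoin al be).
Proof. by move=> x y H; apply: cg_incl; right. Qed.

Lemma cjoin_min al be th :
  is_congruence th -> rsub al th -> rsub be th -> rsub (cjoin al be) th.
Proof. by move=> Hth Hal Hbe; apply: cg_min => // x y [/Hal|/Hbe]. Qed.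

Lemma cjoin_fam_incl P ps : P ps -> rsub ps (cjoin_fam P).
Proof. by move=> Hps x y Hxy; apply: cg_incl; exists ps. Qed.

Lemma cjoin_fam_min P th :
  is_congruence th -> (forall ps, P ps -> rsub ps th) -> rsub (cjoin_fam P) th.
Proof. by move=> Hth HP; apply: cg_min => // x y [ps [/HP]]; apply. Qed.

Lemma cjoin_fam_list_mono (l l' : list (relA A)) : List.incl l l' ->
  rsub (cjoin_fam (fun ps => In ps l)) (cjoin_fam (fun ps => In ps l')).
Proof. by move=> Hll'; apply: cg_mono => x y [ps [/Hll' Hps Hxy]]; exists ps. Qed.

Definition pcg (x y : A) : relA A := cg (fun u v => u = x /\ v = y).

Lemma pcg_in x y : pcg x y x y.
Proof. exact: cg_incl. Qed.

Lemma pcg_min th x y : is_congruence th -> th x y -> rsub (pcg x y) th.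
Proof. by move=> Hth Hxy; apply: cg_min => // u v [-> ->]. Qed.

Lemma max_cong_join ph al : max_cong ph -> is_congruence al -> ~ rsub al ph ->
  forall x y, cjoin al ph x y.
Proof.
move=> [_ [_ Hmax]] Hal Hnal x y.
case: (Hmax (cjoin al ph) (cg_cong _) (@cjoin_r al ph)) => [Hph|Hnab].
  by case: Hnal => u v /(@cjoin_l al ph) /Hph.
exact/Hnab.
Qed.

Lemma max_cong_not_sub_join ph al be :
  max_cong ph -> rsub al ph -> rsub be ph -> ~ rsub (@cNabla S A) (cjoin al be).
Proof.
move=> [Hph [Hprop _]] Hal Hbe Hj; apply: Hprop => x y; split=> // _.
exact: cjoin_min Hph Hal Hbe x y (Hj x y I).
Qed.

End Congruences.

Section OnePlaceCompatibility.
Variables (S : signature) (A : algebra S).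
Implicit Types (R th : relA A).

Definition upd (T : Type) (n : nat) (a : 'I_n -> T) (i : 'I_n) (y : T) : 'I_n -> T :=
  fun j => if j == i then y else a j.

Definition compat1 R := forall (f : sym S) (a : 'I_(arity f) -> A) i y,
  R (a i) y -> R (@op S A f a) (@op S A f (upd a i y)).

Lemma compat1_cong th : is_congruence th -> compat1 th.
Proof.
move=> Hth f a i y Hy; apply: cong_op => // j; rewrite /upd.
by case: eqP => [->|_] //; apply: cong_refl.
Qed.

(* Change the arguments one at a time, from left to right. *)
Lemma compat_of_compat1 R :
  (forall x, R x x) -> (forall x y z, R x y -> R y z -> R x z) -> compat1 R ->
  forall (f : sym S) (a b : 'I_(arity f) -> A),
    (forall i, R (a i) (b i)) -> R (@op S A f a) (@op S A f b).
Proof.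
move=> Hrefl Htrans Hc f a b Hab.
pose mix k (j : 'I_(arity f)) := if (j < k)%N then b j else a j.
have mixS k (Hk : (k < arity f)%N) : mix k.+1 = upd (mix k) (Ordinal Hk) (b (Ordinal Hk)).
  apply: funext => j; rewrite /mix /upd ltnS leq_eqVlt.
  case: (eqVneq j (Ordinal Hk)) => [->|Hne]; first by rewrite !eqxx.
  by have -> : (nat_of_ord j == k) = false by apply/eqP => Ej; case/eqP: Hne; apply: val_inj.
have Hmix k : (k <= arity f)%N -> R (@op S A f a) (@op S A f (mix k)).
  elim: k => [_|k IH Hk].
    by have -> : mix 0 = a by apply: funext.
  apply: Htrans (IH (ltnW Hk)) _; rewrite mixS; apply: Hc.
  by rewrite /mix /= ltnn; apply: Hab.
have -> : b = mix (arity f) by apply: funext => j; rewrite /mix ltn_ord.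
exact: Hmix.
Qed.

Lemma cong_of_compat1 R :
  (forall x, R x x) -> (forall x y, R x y -> R y x) ->
  (forall x y z, R x y -> R y z -> R x z) -> compat1 R -> is_congruence R.
Proof. by move=> Hr Hs Ht Hc; do 3 split=> //; apply: compat_of_compat1. Qed.

Inductive tc R : relA A :=
| tc_step x y : R x y -> tc R x y
| tc_tr x y z : tc R x y -> tc R y z -> tc R x z.

Lemma tc_cong R :
  (forall x, R x x) -> (forall x y, R x y -> R y x) -> compat1 R -> is_congruence (tc R).
Proof.
move=> Hr Hs Hc; apply: cong_of_compat1 => [x|x y|x y z|f a i y].
- exact/tc_step.
- by elim=> [u v /Hs /tc_step|u v w _ Hvu _ Hwv] //; apply: tc_tr Hwv Hvu.
- exact: tc_tr.
- move=> Hy; have [x Ex] : exists x, a i = x by exists (a i).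
  rewrite Ex in Hy; elim: Hy a Ex => [u v Huv|u v w _ IHuv _ IHvw] a Ha.
    by apply: tc_step; apply: Hc; rewrite Ha.
  apply: tc_tr (IHuv a Ha) _.
  have -> : upd a i w = upd (upd a i v) i w.
    by apply: funext => j; rewrite /upd; case: (j == i).
  by apply: IHvw; rewrite /upd eqxx.
Qed.

Lemma tc_union_cong th1 th2 : is_congruence th1 -> is_congruence th2 ->
  is_congruence (tc (fun x y => th1 x y \/ th2 x y)).
Proof.
move=> H1 H2; apply: tc_cong => [x|x y|f a i y].
- by left; apply: cong_refl.
- by case=> H; [left|right]; apply: cong_sym.
- by case=> H; [left; apply: compat1_cong H1 _ _ _ _ H|right; apply: compat1_cong H2 _ _ _ _ H].
Qed.

End OnePlaceCompatibility.

Section Quotient.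
Variables (S : signature) (A : algebra S) (th : relA A).
Hypothesis Hth : is_congruence th.

(* The classes of [th], as predicates; a representative is picked by choice. *)
Definition qcar := {P : A -> Prop | exists x, P = th x}.

Definition qproj (x : A) : qcar := exist _ (th x) (ex_intro _ x erefl).

Definition qrep (q : qcar) : A := sval (cid (svalP q)).

Lemma qrep_spec q : sval q = th (qrep q).
Proof. by rewrite /qrep; case: cid. Qed.

Lemma qrepK q : qproj (qrep q) = q.
Proof. by case: q => P HP; apply: eq_exist; rewrite -(qrep_spec (exist _ P HP)). Qed.

Lemma qproj_eq x y : qproj x = qproj y <-> th x y.
Proof.
split=> [/(congr1 sval) /= ->|Hxy]; first exact: cong_refl.
apply: eq_exist; apply: funext => z; apply: propext.
split=> [Hxz|Hyz]; first exact: (cong_trans Hth (cong_sym Hth Hxy) Hxz).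
exact: (cong_trans Hth Hxy Hyz).
Qed.

Lemma qprojK x : th (qrep (qproj x)) x.
Proof. by rewrite -(qrep_spec (qproj x)); apply: cong_refl. Qed.

Definition quot_alg : algebra S :=
  @Algebra S qcar (fun f a => qproj (@op S A f (fun i => qrep (a i)))).

Lemma quot_op f (a : 'I_(arity f) -> A) :
  @op S quot_alg f (fun i => qproj (a i)) = qproj (@op S A f a).
Proof. by apply/qproj_eq; apply: cong_op => // i; apply: qprojK. Qed.

Lemma eval_quot (V : Type) (v : V -> A) (t : term S V) :
  @eval S quot_alg V (fun n => qproj (v n)) t = qproj (eval v t).
Proof.
elim: t => [//|f ts IH]; rewrite -quot_op.
exact: (congr1 (@op S quot_alg f) (funext IH)).
Qed.

Lemma sat_quot Sigma : satisfies A Sigma -> satisfies quot_alg Sigma.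
Proof.
move=> HA t u Htu v.
have -> : v = (fun n => qproj (qrep (v n))) by apply: funext => n; rewrite qrepK.
by rewrite !eval_quot (HA t u Htu).
Qed.

End Quotient.

Section Power.
Variables (S : signature) (I : Type) (A : algebra S).

Definition pow_alg : algebra S :=
  @Algebra S (I -> A) (fun f a k => @op S A f (fun i => a i k)).

Lemma eval_pow (V : Type) (v : V -> I -> A) (t : term S V) k :
  @eval S pow_alg V v t k = eval (fun n => v n k) t.
Proof.
elim: t => [x|f ts IH] //=; congr (@op S A f _).
by apply: funext => i; rewrite IH.
Qed.

Lemma sat_pow Sigma : satisfies A Sigma -> satisfies pow_alg Sigma.
Proof. by move=> HA t u Htu v; apply: funext => k; rewrite !eval_pow (HA t u Htu). Qed.

End Power.

Section RelationSubalgebra.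
Variables (S : signature) (A : algebra S) (R : relA A).
Hypothesis HR : forall f (a b : 'I_(arity f) -> A),
  (forall i, R (a i) (b i)) -> R (@op S A f a) (@op S A f b).

Definition rel_alg : algebra S :=
  @Algebra S {p : A * A | R p.1 p.2} (fun f a =>
    exist _ (@op S A f (fun i => (sval (a i)).1), @op S A f (fun i => (sval (a i)).2))
      (HR (fun i => svalP (a i)))).

Lemma rel_alg_eq (u v : rel_alg) :
  (sval u).1 = (sval v).1 -> (sval u).2 = (sval v).2 -> u = v.
Proof. by case: u v => [[x1 x2] ?] [[y1 y2] ?] /= E1 E2; apply: eq_exist; rewrite E1 E2. Qed.

Lemma eval_rel_alg (V : Type) (v : V -> rel_alg) (t : term S V) :
  sval (eval v t) = (eval (fun n => (sval (v n)).1) t, eval (fun n => (sval (v n)).2) t).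
Proof.
elim: t => [x|f ts IH] /=; first by case: (sval (v x)).
by congr pair; congr (@op S A f _); apply: funext => i; rewrite IH.
Qed.

Lemma sat_rel_alg Sigma : satisfies A Sigma -> satisfies rel_alg Sigma.
Proof.
by move=> HA t u Htu v; apply: rel_alg_eq; rewrite !eval_rel_alg /= (HA t u Htu).
Qed.

End RelationSubalgebra.

(* In a semidegenerate variety a congruence with an idempotent class is total:
   that class is a one-element subalgebra of the quotient. *)
Lemma semidegenerate_quot (S : signature) (Sigma : term S nat -> term S nat -> Prop)
  (Hsd : semidegenerate_var Sigma) (B : algebra S) (HB : satisfies B Sigma)
  (th : relA B) (Hth : is_congruence th) (e : B) :
  (forall f, th (@op S B f (fun _ => e)) e) -> forall y z, th y z.
Proof.
move=> He y z; apply/(qproj_eq Hth).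
apply: (Hsd _ (sat_quot Hth HB) (qproj th e)) => f.
by rewrite (quot_op Hth (f := f) (fun _ => e)); apply/qproj_eq.
Qed.

Section Compactness.
Variables (S : signature) (A : algebra S).
Implicit Types (th al be : relA A) (P : relA A -> Prop).

Lemma cjoin_fam_fin P x y : cjoin_fam P x y ->
  exists l, (forall ps, In ps l -> P ps) /\ cjoin_fam (fun ps => In ps l) x y.
Proof.
pose Fin x y := exists l, (forall ps, In ps l -> P ps) /\ cjoin_fam (fun ps => In ps l) x y.
have HFin : is_congruence Fin.
  apply: cong_of_compat1
    => [z|u v [l [Hl Huv]]|u v w [l [Hl Huv]] [l' [Hl' Hvw]]|f a i z [l [Hl H]]].
  - by exists nil; split=> //; apply: cong_refl (cg_cong _) _.
  - by exists l; split=> //; apply: cong_sym (cg_cong _) _ _ Huv.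
  - exists (l ++ l')%list; split=> [ps /List.in_app_iff [/Hl|/Hl']|] //.
    apply: (cg_trans (y := v)).
      exact: cjoin_fam_list_mono (List.incl_appl _ (List.incl_refl _)) _ _ Huv.
    exact: cjoin_fam_list_mono (List.incl_appr _ (List.incl_refl _)) _ _ Hvw.
  - by exists l; split=> //; apply: compat1_cong (cg_cong _) _ _ _ _ H.
apply: cg_min HFin _ x y => u v [ps [Hps Huv]].
by exists [:: ps]; split=> [q [<-|[]]|] //; apply: cjoin_fam_incl Huv; left.
Qed.

Lemma cg_fin_compact (R : relA A) (L : list (A * A)) :
  (forall x y, R x y -> In (x, y) L) -> compact (cg R).
Proof.
move=> HRL; split=> [|P _ HP]; first exact: cg_cong.
suff [l [Hl HlR]] : exists l, (forall ps, In ps l -> P ps) /\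
    forall x y, R x y -> In (x, y) L -> cjoin_fam (fun ps => In ps l) x y.
  by exists l; split=> //; apply: cg_min (cg_cong _) _ => x y Rxy; apply: HlR Rxy (HRL _ _ Rxy).
elim: L {HRL} => [|[x y] L [l [Hl HlR]]]; first by exists nil.
case: (EM (R x y)) => [Rxy|NRxy]; last first.
  exists l; split=> // u v Ruv [[Ex Ey]|/(HlR _ _ Ruv) //].
  by case: NRxy; rewrite Ex Ey.
have [l' [Hl' Hxy]] := cjoin_fam_fin (HP _ _ (cg_incl Rxy)).
exists (l' ++ l)%list; split=> [ps /List.in_app_iff [/Hl'|/Hl]|u v Ruv [[<- <-]|Huv]] //.
  exact: cjoin_fam_list_mono (List.incl_appl _ (List.incl_refl _)) _ _ Hxy.
exact: cjoin_fam_list_mono (List.incl_appr _ (List.incl_refl _)) _ _ (HlR _ _ Ruv Huv).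
Qed.

Lemma compact_sub_cg_list (ka R : relA A) : compact ka -> rsub ka (cg R) ->
  exists L : list (A * A), (forall p, In p L -> R p.1 p.2) /\
    rsub ka (cg (fun x y => In (x, y) L)).
Proof.
move=> [_ Hka] HkaR.
pose P ps := exists x y, R x y /\ ps = pcg x y.
have HP ps : P ps -> is_congruence ps by move=> [x [y [_ ->]]]; apply: cg_cong.
have HkaP : rsub ka (cjoin_fam P).
  move=> x y /HkaR; apply: (cg_min (cg_cong _)) => u v Ruv.
  by apply: (cjoin_fam_incl (ps := pcg u v)); [exists u, v|apply: pcg_in].
have [l [Hl Hkal]] := Hka P HP HkaP.
suff [L [HL HlL]] : exists L : list (A * A), (forall p, In p L -> R p.1 p.2) /\
    forall ps, In ps l -> rsub ps (cg (fun x y => In (x, y) L)).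
  by exists L; split=> // x y /Hkal; apply: (cjoin_fam_min (cg_cong _) HlL).
elim: l Hl {Hkal} => [|ps l IH] Hl; first by exists nil.
have [L [HL HlL]] := IH (fun q Hq => Hl q (or_intror Hq)).
have [x [y [Rxy ->]]] := Hl ps (or_introl erefl).
exists ((x, y) :: L); split=> [p [<-|/HL]|q [<-|/HlL Hq]] //.
  by apply: pcg_min (cg_cong _) _; apply: cg_incl; left.
by move=> u v /Hq; apply: cg_mono => a b Hab; right.
Qed.

Lemma compact_subjoin (ka th1 th2 : relA A) :
  compact ka -> is_congruence th1 -> is_congruence th2 -> rsub ka (cjoin th1 th2) ->
  exists al be, [/\ compact al, compact be, rsub al th1, rsub be th2
    & rsub ka (cjoin al be)].
Proof.
move=> Hka Hth1 Hth2 /(compact_sub_cg_list Hka) [L [HL HkaL]].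
exists (cg (fun x y => In (x, y) L /\ th1 x y)), (cg (fun x y => In (x, y) L /\ th2 x y)).
split; try by [apply: (cg_fin_compact (L := L)) => x y []|apply: cg_min => // x y []].
move=> x y /HkaL; apply: (cg_min (cg_cong _)) => u v Huv.
by case: (HL _ Huv) => /= H; [apply: cjoin_l|apply: cjoin_r]; apply: cg_incl.
Qed.

End Compactness.

Section ReducedPower.
Variables (S : signature) (A : algebra S) (P : relA A -> Prop).

Definition finsub := {l : list (relA A) | forall ps, In ps l -> P ps}.

Definition finsub_nil : finsub :=
  exist (fun l => forall ps, In ps l -> P ps) nil (fun ps => False_ind (P ps)).

Definition finsub_join (l : finsub) : relA A := cjoin_fam (fun ps => In ps (sval l)).

Definition eventually_related (x y : finsub -> A) : Prop :=
  exists l0 : finsub, forall l : finsub, List.incl (sval l0) (sval l) ->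
    finsub_join l (x l) (y l).

Lemma finsub_directed (l1 l2 : finsub) :
  exists l : finsub, List.incl (sval l1) (sval l) /\ List.incl (sval l2) (sval l).
Proof.
case: l1 l2 => [l1 H1] [l2 H2].
have H ps : In ps (l1 ++ l2)%list -> P ps by case/List.in_app_iff => [/H1|/H2].
exists (exist _ _ H); split; [exact: List.incl_appl|exact: List.incl_appr].
Qed.

Lemma eventually_related_cong : @is_congruence S (pow_alg finsub A) eventually_related.
Proof.
have Hjoin (l : finsub) : is_congruence (finsub_join l) by apply: cg_cong.
apply: cong_of_compat1 => [x|x y [l0 H]|x y z [l1 H1] [l2 H2]|f a i y [l0 H]].
- by exists finsub_nil => l _; apply: cong_refl (Hjoin l) _.
- by exists l0 => l /H; apply: cong_sym (Hjoin l) _ _.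
- have [l0 [H10 H20]] := finsub_directed l1 l2.
  exists l0 => l Hl; apply: (cong_trans (Hjoin l)).
    by apply: H1 => ps /H10 /Hl.
  by apply: H2 => ps /H20 /Hl.
- exists l0 => l /H Hl; apply: (cong_op (Hjoin l)) => j; rewrite /upd.
  by case: eqP => [->|_] //; apply: cong_refl (Hjoin l) _.
Qed.

End ReducedPower.

Lemma nabla_compact (S : signature) (Sigma : term S nat -> term S nat -> Prop)
  (Hsd : semidegenerate_var Sigma) (A : algebra S) (HA : satisfies A Sigma) :
  compact (@cNabla S A).
Proof.
split=> [|P _ Hsub]; first exact: nabla_cong.
apply: contrapT => Hno.
have Hwit (l : finsub P) : exists p : A * A, ~ finsub_join l p.1 p.2.
  apply: contrapT => Hall; apply: Hno; exists (sval l).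
  split=> [|x y _]; first exact: (svalP l).
  by apply: contrapT => Hxy; apply: Hall; exists (x, y).
have [pk Hpk] := choice Hwit.
pose a0 := (pk (finsub_nil P)).1.
have Hidem f :
    eventually_related (@op S (pow_alg (finsub P) A) f (fun _ _ => a0)) (fun _ => a0).
  have [l [Hl Hf]] := cjoin_fam_fin (Hsub (@op S A f (fun _ => a0)) a0 I).
  by exists (exist _ l Hl) => l' Hll'; apply: cjoin_fam_list_mono Hll' _ _ Hf.
have [l0 Hl0] := semidegenerate_quot Hsd (sat_pow (I := finsub P) HA)
  (eventually_related_cong P) Hidem (fun l => (pk l).1) (fun l => (pk l).2).
exact: Hpk l0 (Hl0 l0 (List.incl_refl _)).
Qed.

Lemma chain_upper_bound (T : Type) (F : relA T -> Prop) (b : relA T) :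
  F b -> (forall p q, F p -> F q -> rsub p q \/ rsub q p) ->
  forall l, (forall p, In p l -> F p) -> exists m, F m /\ forall p, In p l -> rsub p m.
Proof.
move=> Fb Ftot; elim=> [|p l IH] Hl; first by exists b.
have [m [Fm Hm]] := IH (fun q Hq => Hl q (or_intror Hq)).
have Fp := Hl p (or_introl erefl).
case: (Ftot p m Fp Fm) => [Hpm|Hmp].
  by exists m; split=> // q [<-|/Hm].
by exists p; split=> // q [<-|/Hm Hqm] // x y /Hqm /Hmp.
Qed.

Section MaximalCongruences.
Variables (S : signature) (A : algebra S).
Hypothesis Hnabla : compact (@cNabla S A).

Lemma chain_join_proper (b : relA A) (F : relA A -> Prop) :
  F b -> (forall ps, F ps -> is_congruence ps /\ ~ rsub (@cNabla S A) ps) ->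
  (forall p q, F p -> F q -> rsub p q \/ rsub q p) ->
  ~ rsub (@cNabla S A) (cjoin_fam F).
Proof.
move=> Fb HF Ftot Hsub.
have [l [Hl Hsubl]] := Hnabla.2 F (fun ps Fps => (HF ps Fps).1) Hsub.
have [m [Fm Hm]] := chain_upper_bound Fb Ftot Hl.
apply: (HF m Fm).2 => x y /Hsubl.
exact: (cjoin_fam_min (HF m Fm).1 Hm).
Qed.

Lemma exists_max (th : relA A) : is_congruence th -> ~ rsub (@cNabla S A) th ->
  exists ps, max_cong ps /\ rsub th ps.
Proof.
move=> Hth Hp.
pose T := {ps : relA A | is_congruence ps /\ rsub th ps /\ ~ rsub (@cNabla S A) ps}.
pose le (s t : T) := `[< rsub (sval s) (sval t) >].
have [t Hmax] : exists t, premaximal le t.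
  apply: (ZL_preorder (exist _ th (conj Hth (conj (fun _ _ H => H) Hp)))).
  - by move=> s; apply/asboolP.
  - by move=> r s t /asboolP Hrs /asboolP Hst; apply/asboolP => x y /Hrs /Hst.
  move=> C Ctot.
  pose F ps := ps = th \/ exists s, C s /\ ps = sval s.
  have HF q : F q -> is_congruence q /\ rsub th q /\ ~ rsub (@cNabla S A) q.
    case=> [->|[[s Hs] [_ ->]]] //.
    by split=> //; split=> // x y.
  have Ftot p q : F p -> F q -> rsub p q \/ rsub q p.
    case=> [->|[s [Cs ->]]] [->|[t [Ct ->]]].
    - by left.
    - by left; case: (svalP t) => _ [].
    - by right; case: (svalP s) => _ [].
    - by case: (Ctot s t Cs Ct) => /asboolP; [left|right].
  have Hup : is_congruence (cjoin_fam F) /\ rsub th (cjoin_fam F) /\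
      ~ rsub (@cNabla S A) (cjoin_fam F).
    split; [exact: cg_cong|split; [by apply: cjoin_fam_incl; left|]].
    by apply: chain_join_proper (or_introl erefl) _ Ftot => q /HF [? [_ ?]].
  exists (exist _ (cjoin_fam F) Hup) => s Cs; apply/asboolP.
  by apply: cjoin_fam_incl; right; exists s.
case: t Hmax => ps Hps_prop Hmax; have [Hps [Hthps Hpsp]] := Hps_prop.
exists ps; split=> //; split=> //; split=> [Hnab|q Hq Hpsq].
  by apply: Hpsp => x y _; apply/Hnab.
case: (EM (rsub (@cNabla S A) q)) => [Hnab|Hqp]; [right|left] => x y.
  by split=> // _; apply: Hnab.
have Hq' : is_congruence q /\ rsub th q /\ ~ rsub (@cNabla S A) q.
  by split=> //; split=> // u v /Hthps /Hpsq.
have /asboolP Hqps := Hmax (exist _ q Hq') (introT (asboolP _) Hpsq).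
by split=> [/Hqps|/Hpsq].
Qed.

End MaximalCongruences.

Lemma hom_pullback_cong (S : signature) (B C : algebra S) (h : B -> C) (th : relA C) :
  (forall f (a : 'I_(arity f) -> B), h (@op S B f a) = @op S C f (fun i => h (a i))) ->
  is_congruence th -> is_congruence (fun x y => th (h x) (h y)).
Proof.
move=> Hh Hth; split; [|split; [|split]] => [x|x y|x y z|f a b Hab].
- exact: (cong_refl Hth).
- exact: (cong_sym Hth).
- exact: (cong_trans Hth).
- by rewrite !Hh; apply: (cong_op Hth).
Qed.

Section Commutator.
Variables (S : signature) (A : algebra S) (al be : relA A).

Lemma comm_cong : is_congruence (comm al be).
Proof.
split; [|split; [|split]].
- by move=> x de Hde _; apply: cong_refl.
- by move=> x y Hxy de Hde HC; apply: cong_sym => //; apply: Hxy.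
- by move=> x y z Hxy Hyz de Hde HC; apply: (cong_trans Hde); [apply: Hxy|apply: Hyz].
- by move=> f a b Hab de Hde HC; apply: cong_op => // i; apply: Hab.
Qed.

Lemma comm_centralizes : centralizes al be (comm al be).
Proof. by move=> t a b c d Ha Hc Hac de Hde HC; apply: (HC t a b c d Ha Hc); apply: Hac. Qed.

Lemma comm_sub_l : is_congruence al -> rsub (comm al be) al.
Proof.
move=> Hal x y Hxy; apply: Hxy => // t a b c d Ha Hc Hac.
have Hba e : al (eval (sumv b e) t) (eval (sumv a e) t).
  by apply: cong_eval => // -[n|n] /=; [apply: cong_sym|apply: cong_refl].
apply: (cong_trans Hal (Hba c)); apply: (cong_trans Hal Hac).
by apply: cong_sym => //; apply: Hba.
Qed.

Lemma comm_sub_r : is_congruence be -> rsub (comm al be) be.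
Proof.
move=> Hbe x y Hxy; apply: Hxy => // t a b c d Ha Hc _.
by apply: cong_eval => // -[n|n] /=; [apply: cong_refl|apply: Hc].
Qed.

End Commutator.

Fixpoint rename (S : signature) (V W : Type) (r : V -> W) (t : term S V) : term S W :=
  match t with
  | Var x => Var S (r x)
  | App f ts => App (fun i => rename r (ts i))
  end.

Lemma eval_rename (S : signature) (A : algebra S) (V W : Type) (r : V -> W) (v : W -> A)
  (t : term S V) : eval v (rename r t) = eval (fun x => v (r x)) t.
Proof.
elim: t => [x|f ts IH] //=; congr (@op S A f _).
by apply: funext => i; rewrite IH.
Qed.

Section Matrices.
Variables (S : signature) (A : algebra S) (al be : relA A).
Hypotheses (Hal : is_congruence al) (Hbe : is_congruence be).

Local Notation B := (rel_alg (cong_op Hbe)).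

(* [u] and [v] are the two rows of a matrix of [M(al, be)]. *)
Definition matrix_rel : relA B := fun u v =>
  exists (t : term S (nat + nat)) (a b c d : nat -> A),
    [/\ forall i, al (a i) (b i), forall j, be (c j) (d j),
        sval u = (eval (sumv a c) t, eval (sumv a d) t)
      & sval v = (eval (sumv b c) t, eval (sumv b d) t)].

Definition matrix_cong : relA B := tc matrix_rel.

Definition diag (x : A) : B := exist _ (x, x) (cong_refl Hbe x).

Definition on_fst (th : relA A) : relA B := fun u v => th (sval u).1 (sval v).1.

Definition on_snd (th : relA A) : relA B := fun u v => th (sval u).2 (sval v).2.

Definition diag_closed (R : relA B) (de : relA A) : Prop :=
  forall u v, R u v -> de (sval u).1 (sval u).2 -> de (sval v).1 (sval v).2.

Lemma matrix_rel_diag x y : al x y -> matrix_rel (diag x) (diag y).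
Proof.
move=> Hxy; exists (Var _ (inl 0)), (fun _ => x), (fun _ => y), (fun _ => x), (fun _ => x).
by split=> // j; apply: cong_refl.
Qed.

Lemma matrix_rel_refl u : matrix_rel u u.
Proof.
case: u => [[x y] Hxy].
exists (Var _ (inr 0)), (fun _ => x), (fun _ => x), (fun _ => x), (fun _ => y).
by split=> // i; apply: cong_refl.
Qed.

Lemma matrix_rel_sym u v : matrix_rel u v -> matrix_rel v u.
Proof.
move=> [t [a [b [c [d [Hab Hcd Hu Hv]]]]]].
by exists t, b, a, c, d; split=> // i; apply: cong_sym.
Qed.

(* Substitute the matrix for the [i]-th argument of [f]; the other arguments
   become constant columns, read off the even-numbered column variables. *)
Lemma matrix_rel_compat1 : compat1 matrix_rel.
Proof.
move=> f a i y [t [a' [b' [c' [d' [Ha Hc Eu Ev]]]]]].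
pose shift (z : nat + nat) := if z is inr k then inr k.*2.+1 else z.
pose t' := App (f := f)
  (fun j => if j == i then rename shift t else Var S (inr (nat_of_ord j).*2)).
pose col (g : nat -> A) (pr : A * A -> A) m :=
  if odd m then g m./2 else
  if (insub m./2 : option 'I_(arity f)) is Some j then pr (sval (a j)) else g 0.
have col_odd g pr k : col g pr k.*2.+1 = g k by rewrite /col /= odd_double uphalf_double.
have col_even g pr (j : 'I_(arity f)) : col g pr (nat_of_ord j).*2 = pr (sval (a j)).
  by rewrite /col odd_double doubleK valK.
have col_shift x g pr : (fun z => sumv x (col g pr) (shift z)) = sumv x g.
  by apply: funext => -[k|k] //=; rewrite col_odd.
exists t', a', b', (col c' fst), (col d' snd); split=> //.
- move=> m; rewrite /col; case: (odd m) => //.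
  by case: (insub _) => [j|] //; apply: (svalP (a j)).
all: rewrite /= ?/upd; congr pair; congr (@op S A f _); apply: funext => j.
all: case: (eqVneq j i) => [Eji|_] /=; first subst j.
all: by rewrite ?col_even ?eval_rename ?col_shift ?Eu ?Ev.
Qed.

Lemma matrix_cong_cong : is_congruence matrix_cong.
Proof. exact: tc_cong matrix_rel_refl matrix_rel_sym matrix_rel_compat1. Qed.

Lemma matrix_cong_fst u v : matrix_cong u v -> al (sval u).1 (sval v).1.
Proof.
elim=> [{}u {}v [t [a [b [c [d [Hab _ -> ->]]]]]]|u1 u2 u3 _ H12 _ H23] /=.
  by apply: cong_eval => // -[n|n] /=; [apply: Hab|apply: cong_refl].
exact: (cong_trans Hal H12 H23).
Qed.

Lemma tc_diag_closed R de : diag_closed R de -> diag_closed (tc R) de.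
Proof. by move=> HR u v; elim=> [|u1 u2 u3 _ H12 _ H23] //; auto. Qed.

Lemma matrix_cong_diag_closed de : centralizes al be de -> diag_closed matrix_cong de.
Proof.
move=> Hde; apply: tc_diag_closed => u v [t [a [b [c [d [Hab Hcd -> ->]]]]]] /=.
exact: Hde.
Qed.

Lemma on_fst_cong th : is_congruence th -> is_congruence (on_fst th).
Proof. exact: (hom_pullback_cong (h := fun u : B => (sval u).1) (fun _ _ => erefl)). Qed.

Lemma on_snd_cong th : is_congruence th -> is_congruence (on_snd th).
Proof. exact: (hom_pullback_cong (h := fun u : B => (sval u).2) (fun _ _ => erefl)). Qed.

Lemma diag_op f (a : 'I_(arity f) -> A) :
  @op S B f (fun i => diag (a i)) = diag (@op S A f a).
Proof. exact: rel_alg_eq. Qed.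

End Matrices.

Arguments matrix_cong {S A} al {be Hbe}.
Arguments on_fst {S A be Hbe} th.
Arguments on_snd {S A be Hbe} th.
Arguments diag_closed {S A be Hbe} R de.
Arguments on_fst_cong {S A be Hbe th}.
Arguments on_snd_cong {S A be Hbe th}.

Section ModularVariety.
Variables (S : signature) (Sigma : term S nat -> term S nat -> Prop).
Hypothesis Hmod : cong_modular_var Sigma.

(* Modularity with [pcg x y <= de], applied along the path [s ga x (pcg x y) y ga t]. *)
Lemma modular_square (B : algebra S) (HB : satisfies B Sigma) (th ga de : relA B)
  (s t x y : B) :
  is_congruence th -> is_congruence ga -> is_congruence de ->
  rsub (cmeet ga de) th -> th x y -> ga s x -> ga y t -> de x y -> de s t -> th s t.
Proof.
move=> Hth Hga Hde Hgd Hxy Hsx Hyt Hdxy Hdst.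
have [Hmeet _] := Hmod HB (cg_cong _) Hga Hde (pcg_min Hde Hdxy) s t.
have Hst : cjoin (pcg x y) (cmeet ga de) s t.
  apply: Hmeet; split=> //.
  apply: (cg_trans (y := x)); first exact: cjoin_r.
  by apply: (cg_trans (y := y)); [apply: cjoin_l; apply: pcg_in|apply: cjoin_r].
exact: cjoin_min Hth (pcg_min Hth Hxy) Hgd s t Hst.
Qed.

Variables (A : algebra S) (al be : relA A).
Hypotheses (HA : satisfies A Sigma) (Hal : is_congruence al) (Hbe : is_congruence be).

Local Notation B := (rel_alg (cong_op Hbe)).

Let HB : satisfies B Sigma := sat_rel_alg HA.

Lemma matrix_cong_fst_eq (u v : B) : matrix_cong al u v ->
  (sval u).1 = (sval v).1 -> comm al be (sval u).2 (sval v).2.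
Proof.
move=> Huv E1.
have Hpq : be (sval u).2 (sval v).2.
  have Hu : be (sval u).1 (sval u).2 := svalP u.
  rewrite E1 in Hu; exact: (cong_trans Hbe (cong_sym Hbe Hu) (svalP v)).
have Hpg : matrix_cong al (diag Hbe (sval u).2) (exist _ (_, _) Hpq).
  apply: (modular_square HB (x := u) (y := v)
    (ga := on_snd (@cDelta S A)) (de := on_fst (@cDelta S A))) => //.
  - exact: matrix_cong_cong.
  - exact: on_snd_cong (delta_cong A).
  - exact: on_fst_cong (delta_cong A).
  - move=> s t [E2 E1']; rewrite (rel_alg_eq E1' E2).
    exact: cong_refl (matrix_cong_cong Hal Hbe) _.
have Hcomm_pp := cong_refl (comm_cong al be) (sval u).2.
exact: (matrix_cong_diag_closed (@comm_centralizes _ _ al be) Hpg Hcomm_pp).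
Qed.

Lemma matrix_cong_shift (ph : relA A) : is_congruence ph -> rsub (comm al be) ph ->
  diag_closed (@matrix_cong _ _ al be Hbe) ph.
Proof.
move=> Hph Hsub u v Huv Hu.
apply: (modular_square HB (th := on_snd ph) (ga := matrix_cong al) (de := on_fst (@cDelta S A))
  (s := diag Hbe (sval v).1) (x := diag Hbe (sval u).1) (y := u)) => //.
- exact: on_snd_cong.
- exact: matrix_cong_cong.
- exact: on_fst_cong (delta_cong A).
- by move=> s t [Hst Est]; apply: Hsub; apply: matrix_cong_fst_eq.
- apply: tc_step; apply: matrix_rel_diag; apply: cong_sym => //.
  exact: (matrix_cong_fst Hal Huv).
Qed.

(* Glue [matrix_cong] to [ph * ph]: the result keeps the [ph]-diagonal, yet restricted to the
   diagonal it contains [al] and [ph], hence everything; semidegeneracy then collapses it. *)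
Lemma max_cong_comm_sub (ph : relA A) : semidegenerate_var Sigma -> max_cong ph ->
  rsub (comm al be) ph -> rsub al ph \/ rsub be ph.
Proof.
move=> Hsd Hmax Hsub; have Hph := Hmax.1.
case: (EM (rsub al ph)) => [|Hnal]; [by left|right].
apply: contrapT => Hnbe.
have [a0 [b0 [Hab Hnab]]] : exists a0 b0, be a0 b0 /\ ~ ph a0 b0.
  apply: contrapT => Hn; apply: Hnbe => x y Hxy; apply: contrapT => Hnxy.
  by apply: Hn; exists x, y.
pose Psi := tc (fun u v : B => matrix_cong al u v \/ cmeet (on_fst ph) (on_snd ph) u v).
have HPsi : is_congruence Psi.
  apply: (tc_union_cong (matrix_cong_cong Hal Hbe)).
  exact: (cmeet_cong (on_fst_cong Hph) (on_snd_cong Hph)).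
have Hclosed : diag_closed Psi ph.
  apply: tc_diag_closed => u v [Huv|[H1 H2]]; first exact: matrix_cong_shift.
  move=> Hu; apply: (cong_trans Hph (cong_sym Hph H1)); exact: (cong_trans Hph Hu H2).
have Hdiag x y : Psi (diag Hbe x) (diag Hbe y).
  have Hkap := hom_pullback_cong (fun f a => esym (diag_op Hbe a)) HPsi.
  apply: (cjoin_min Hkap _ _ (max_cong_join Hmax Hal Hnal x y)) => u v Huv.
    by apply: tc_step; left; apply: tc_step; apply: matrix_rel_diag.
  by apply: tc_step; right.
have Hidem f : Psi (@op S B f (fun _ => diag Hbe a0)) (diag Hbe a0).
  by rewrite (diag_op Hbe (fun _ => a0)); apply: Hdiag.
have Htot := semidegenerate_quot Hsd HB HPsi Hidem (diag Hbe a0) (exist _ (a0, b0) Hab).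
exact: (Hnab (Hclosed _ _ Htot (cong_refl Hph a0))).
Qed.

End ModularVariety.

Lemma max_cong_prime (S : signature) (Sigma : term S nat -> term S nat -> Prop)
  (Hmod : cong_modular_var Sigma) (Hsd : semidegenerate_var Sigma)
  (A : algebra S) (HA : satisfies A Sigma) (ph : relA A) :
  max_cong ph -> prime_cong ph.
Proof.
move=> Hmax; split; [exact: Hmax.1|split; [exact: Hmax.2.1|]].
by move=> al be Hal Hbe; apply: (max_cong_comm_sub Hmod HA Hal Hbe Hsd Hmax).
Qed.

Section ClopenSubsetsOfMax.
Variables (S : signature) (Sigma : term S nat -> term S nat -> Prop).
Hypotheses (Hmod : cong_modular_var Sigma) (Hsd : semidegenerate_var Sigma).
Variables (A : algebra S) (U : relA A -> Prop).
Hypotheses (HA : satisfies A Sigma) (HU : forall ph, U ph -> max_cong ph).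

Lemma max_Dset (th ph : relA A) : max_cong ph -> Dset th ph <-> ~ rsub th ph.
Proof.
by move=> Hph; split=> [[]|Hn] //; split=> //; apply: (max_cong_prime Hmod Hsd HA Hph).
Qed.

Lemma clopen_in_Max_of_join (al be : relA A) :
  is_congruence al -> is_congruence be -> rsub (@cNabla S A) (cjoin al be) ->
  rsub (comm al be) (@Rad S A) -> (forall ph, U ph <-> max_cong ph /\ Dset al ph) ->
  clopen_in_Max U.
Proof.
move=> Hal Hbe Hj Hr HUal; split; first by exists al.
exists be; split=> // ph; split=> [[Hm Hu]|[Hm /(max_Dset _ Hm) Hnbe]].
  split=> //; apply/(max_Dset _ Hm) => Hbeph.
  have Halph : rsub al ph.
    by apply: contrapT => Hnal; apply: Hu; apply/HUal; split=> //; apply/max_Dset.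
  exact: max_cong_not_sub_join Hm Halph Hbeph Hj.
split=> // /HUal [_ /(max_Dset _ Hm) Hnal].
have [_ [_ Hprime]] := max_cong_prime Hmod Hsd HA Hm.
by case: (Hprime al be Hal Hbe (fun x y Hxy => Hr x y Hxy ph Hm)).
Qed.

Lemma join_of_clopen_in_Max : clopen_in_Max U ->
  exists al be : relA A, compact al /\ compact be /\
    reqv (cjoin al be) (@cNabla S A) /\ rsub (comm al be) (@Rad S A) /\
    (forall ph, U ph <-> max_cong ph /\ Dset al ph).
Proof.
move=> [[th1 [Hth1 HU1]] [th2 [Hth2 HU2]]].
have Hin ph : U ph -> rsub th2 ph.
  move=> Hu; apply: contrapT => /(max_Dset _ (HU Hu)) /(conj (HU Hu)) /HU2 [_].
  by case.
have Hout ph : max_cong ph -> ~ U ph -> rsub th1 ph.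
  move=> Hm Hu; apply: contrapT => /(max_Dset _ Hm) /(conj Hm) /HU1.
  exact: Hu.
have Hnabla := nabla_compact Hsd HA.
have Hj : rsub (@cNabla S A) (cjoin th1 th2).
  apply: contrapT => /(exists_max Hnabla (cg_cong _)) [ps [Hps Hsub]].
  have [Hu|Hu] := EM (U ps).
    by case/HU1: Hu => _ /(max_Dset _ Hps); apply=> x y /cjoin_l /Hsub.
  by case/(HU2 ps): (conj Hps Hu) => _ /(max_Dset _ Hps); apply=> x y /cjoin_r /Hsub.
have [al [be [Hal Hbe Hal1 Hbe2 Hab]]] := compact_subjoin Hnabla Hth1 Hth2 Hj.
exists al, be; do 2 split=> //; split; first by move=> x y; split=> // _; apply: Hab.
split=> [x y Hxy ps Hps|ph].
  have [Hu|Hu] := EM (U ps).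
    by apply: Hin Hu _ _ (Hbe2 _ _ (comm_sub_r Hbe.1 Hxy)).
  by apply: Hout Hps Hu _ _ (Hal1 _ _ (comm_sub_l Hal.1 Hxy)).
split=> [Hu|[Hm /(max_Dset _ Hm) Hnal]].
  split; first exact: HU.
  apply/(max_Dset _ (HU Hu)) => Halph.
  by apply: max_cong_not_sub_join (HU Hu) Halph _ Hab => x y /Hbe2 /(Hin _ Hu).
apply: contrapT => Hu; apply: Hnal => x y /Hal1; exact: Hout Hm Hu x y.
Qed.

End ClopenSubsetsOfMax.

Theorem theorem5p14 (S : signature) (Sigma : term S nat -> term S nat -> Prop)
  (Hmod : cong_modular_var Sigma) (Hsd : semidegenerate_var Sigma)
  (Hcomp : compact_comm_closed_var Sigma)
  (Hbool : preserves_boolean_center_var Sigma)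
  (A : algebra S) (HA : satisfies A Sigma)
  (U : relA A -> Prop) (HU : forall ph, U ph -> max_cong ph) :
  clopen_in_Max U <->
  exists al be : relA A, compact al /\ compact be /\
    reqv (cjoin al be) (@cNabla S A) /\ rsub (comm al be) (@Rad S A) /\
    (forall ph, U ph <-> max_cong ph /\ Dset al ph).
Proof.
split; first exact: (join_of_clopen_in_Max Hmod Hsd HA HU).
move=> [al [be [Hal [Hbe [Hj [Hr HUal]]]]]].
apply: (clopen_in_Max_of_join Hmod Hsd HA Hal.1 Hbe.1 _ Hr HUal).
by move=> x y _; apply/Hj.
Qed.
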